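(* Every $2$-uniform affine Hjelmslev plane is isomorphic to an incidence structure produced by the Affine Construction (Algorithm 2) described in the context, for a suitable integer $m\ge 2$, affine plane $\mathcal{A}$ of order $m$, affine planes $\mathcal{A}_P$, orthogonal arrays $\mathcal{O}_l$, and admissible choices $\pi,\beta$.
   Context: An orthogonal array $OA(2,k,v)$ is a $v^2\times k$ array with entries from a $v$-element symbol set such that in any two columns every ordered pair of symbols occurs in exactly one row. An affine plane of order $m$ has $m^2$ points, $m$ points per line, $m+1$ lines through each point, and its lines split into $m+1$ parallel classes, each consisting of $m$ pairwise disjoint lines covering all points. Affine Construction (Algorithm 2). Let $\mathcal{A}$ be an affine plane of order $m$. For each point $P$ of $\mathcal{A}$ let $\mathcal{A}_P$ be an affine plane of order $m$ (not necessarily all the same). For each line $l$ of $\mathcal{A}$ let $\mathcal{O}_l$ be an $OA(2,m,m)$ on a symbol set $\Sigma_l$ whose $m$ columns are labelled bijectively by the $m$ points of $l$. For each incident pair $P\in l$ choose a parallel class $\pi(P,l)$ of $\mathcal{A}_P$ such that, for each fixed $P$, the map $l\mapsto\pi(P,l)$ is a bijection from the $m+1$ lines of $\mathcal{A}$ through $P$ to the $m+1$ parallel classes of $\mathcal{A}_P$; and choose a bijection $\beta_{P,l}$ from $\Sigma_l$ to the $m$ lines of $\pi(P,l)$. The points of the constructed structure are the pairs $(P,x)$ with $P$ a point of $\mathcal{A}$ and $x$ a point of $\mathcal{A}_P$. For each line $l$ of $\mathcal{A}$ and each row $r$ of $\mathcal{O}_l$, there is the line $\bigcup_{P\in l}\{(P,x):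 x\in \beta_{P,l}(\mathcal{O}_l(r,P))\}$, where $\mathcal{O}_l(r,P)$ is the entry in row $r$ and the column labelled $P$. Incidence is membership. Affine Hjelmslev plane: an incidence structure $\mathcal{H}$ such that (1) any two points are incident with at least one line; (2) two lines meeting in more than one point are called neighbours ($g\sim h$), and two points incident with more than one common line are called neighbours ($P\sim Q$), the relations being reflexively extended; (3) there is an incidence-preserving surjection $\phi$ from $\mathcal{H}$ onto an ordinary affine plane with $\phi(P)=\phi(Q)\iff P\sim Q$, $\phi(g)=\phi(h)\iff g\sim h$, and lines $g,h$ with no common point satisfying $\phi(g)\parallel\phi(h)$. Uniformity: a $1$-uniform affine Hjelmslev plane is an ordinary affine plane. For a point $P$, the point-neighbourhood restriction $\bar P$ is the incidence structure whose points are the points $Q\sim P$ and whose lines are the nonempty sets $g\cap\bar P$ for lines $g$ of $\mathcal{H}$. An affine (or projective) Hjelmslev plane is $n$-uniform if for every point $P$, $\bar P$ is an $(n-1)$-uniform affine Hjelmslev plane, and every line of $\bar P$ is the restriction of the same number of lines of $\mathcal{H}$. *)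

From HB Require Import structures.
From mathcomp Require Import all_boot.
Set Implicit Arguments. Unset Strict Implicit. Unset Printing Implicit Defensive.

Record IS := MkIS { ipt : finType; iln : finType; inc : ipt -> iln -> bool }.
Arguments inc {i}.

Definition surj (A B : Type) (f : A -> B) := forall y, exists x, f x = y.

Definition par (S : IS) (l l' : iln S) : bool :=
  (l == l') || [forall P, ~~ (inc P l && inc P l')].

Definition affine_plane (S : IS) : Prop :=
  [/\ (forall P Q : ipt S, P != Q -> exists! l, inc P l && inc Q l),
      (forall (P : ipt S) (l : iln S), exists! l', inc P l' && par l l') &
      (exists P Q R : ipt S, [/\ P != Q, Q != R, P != R &
          ~ exists l, [&& inc P l, inc Q l & inc R l]])].

Definition affine_plane_order (S : IS) (m : nat) : Prop :=
  affine_plane S /\ forall l : iln S, #|[set P | inc P l]| = m.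

Definition parallel_class (S : IS) (C : {set iln S}) : Prop :=
  exists l, C = [set l' | par l l'].

Definition nbp (S : IS) (P Q : ipt S) : bool :=
  (P == Q) || (1 < #|[set g | inc P g && inc Q g]|).
Definition nbl (S : IS) (g h : iln S) : bool :=
  (g == h) || (1 < #|[set P | inc P g && inc P h]|).

Definition AH_plane (H : IS) : Prop :=
  (forall P Q : ipt H, exists g, inc P g && inc Q g) /\
  exists (A : IS) (fp : ipt H -> ipt A) (fl : iln H -> iln A),
    [/\ affine_plane A, surj fp, surj fl &
        (forall P g, inc P g -> inc (fp P) (fl g))] /\
    [/\ (forall P Q, fp P = fp Q <-> nbp P Q),
        (forall g h, fl g = fl h <-> nbl g h) &
        (forall g h, (forall P, ~~ (inc P g && inc P h)) -> par (fl g) (fl h))].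

Definition nb_pt (H : IS) (P : ipt H) : finType := {Q : ipt H | nbp P Q}.
Definition restr_line (H : IS) (P : ipt H) (g : iln H) : {set nb_pt P} :=
  [set Q : nb_pt P | inc (val Q) g].
Definition nb_ln (H : IS) (P : ipt H) : finType :=
  {S : {set nb_pt P} | (S != set0) && [exists g, S == restr_line P g]}.
Definition restr (H : IS) (P : ipt H) : IS :=
  @MkIS (nb_pt P) (nb_ln P) (fun Q S => Q \in val S).

Definition two_uniform_AH (H : IS) : Prop :=
  AH_plane H /\
  forall P : ipt H, affine_plane (restr P) /\
    exists c, forall S : iln (restr P),
      #|[set g | restr_line P g == val S]| = c.

Definition isomorphic (S T : IS) : Prop :=
  exists (f : ipt S -> ipt T) (g : iln S -> iln T),
    [/\ bijective f, bijective g & forall P l, inc P l = inc (f P) (g l)].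

Definition construction (A : IS) (AP : ipt A -> IS)
  (Sym Row : iln A -> finType) (O : forall l, Row l -> ipt A -> Sym l)
  (beta : forall (P : ipt A) (l : iln A), Sym l -> iln (AP P)) : IS :=
  @MkIS {P : ipt A & ipt (AP P)} {l : iln A & Row l}
    (fun X L => inc (tag X) (tag L) &&
        inc (tagged X) (beta (tag X) (tag L) (O (tag L) (tagged L) (tag X)))).

Definition admissible (m : nat) (A : IS) (AP : ipt A -> IS)
  (Sym Row : iln A -> finType) (O : forall l, Row l -> ipt A -> Sym l)
  (pi : forall P : ipt A, iln A -> {set iln (AP P)})
  (beta : forall (P : ipt A) (l : iln A), Sym l -> iln (AP P)) : Prop :=
  [/\ 2 <= m, affine_plane_order A m &
      (forall P, affine_plane_order (AP P) m)] /\
  [/\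
      (* O l is an OA(2,m,m) on the symbol set Sym l, columns = points of l *)
      (forall l, [/\ #|Sym l| = m, #|Row l| = m * m &
         forall P Q, P != Q -> inc P l -> inc Q l ->
           forall s t : Sym l, exists! r, O l r P = s /\ O l r Q = t]),
      (forall P, [/\ forall l, inc P l -> parallel_class (pi P l),
         forall l l', inc P l -> inc P l' -> pi P l = pi P l' -> l = l' &
         forall C, parallel_class C -> exists l, inc P l /\ pi P l = C]) &
      (forall P l, inc P l -> injective (beta P l) /\
         forall y, y \in pi P l <-> exists s, beta P l s = y)].

From HB Require Import structures.
From mathcomp Require Import all_boot.
Set Implicit Arguments. Unset Strict Implicit. Unset Printing Implicit Defensive.

(* Let fp, fl be the canonical epimorphism of H onto the affine plane A of order m.
   Neighbours are exactly the points with the same image, so the neighbourhood of a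
   point X over P is the whole fibre over P, an affine plane A_P; its order is m because
   its lines through X correspond, through their images, to the lines of A through P.
   For a line l through P, the traces on the fibre of the lines of H over l form a
   parallel class pi(P,l) of A_P (every line over l meets every fibre over a point of l).
   Numbering each such class by m symbols, record a line g over l by the symbols of its
   traces; since two points in distinct fibres lie on exactly one line, these records form
   an OA(2,m,m), and X |-> (fp X, X), g |-> (fl g, g) identifies H with the construction. *)

Section AffinePlane.
Variable S : IS.
Hypothesis hS : affine_plane S.
Implicit Types (P Q X Y : ipt S) (a b c k l : iln S).

Definition points_of l := [set X | inc X l].
Definition class_of k := [set k' | par k k'].

Lemma exists_join P Q : P != Q -> exists l, inc P l && inc Q l.
Proof. by case: hS => hjoin _ _ /hjoin [l []]; exists l. Qed.

Lemma join_uniq P Q l l' :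
  P != Q -> inc P l -> inc Q l -> inc P l' -> inc Q l' -> l = l'.
Proof.
case: hS => hjoin _ _ /hjoin [l0 [_ u]] Pl Ql Pl' Ql'.
by rewrite -(u l) ?Pl ?Ql // (u l') ?Pl' ?Ql'.
Qed.

Lemma exists_par P l : exists l', inc P l' && par l l'.
Proof. by case: hS => _ hpar _; case: (hpar P l) => l' []; exists l'. Qed.

Lemma par_uniq P l a b : inc P a -> par l a -> inc P b -> par l b -> a = b.
Proof.
case: hS => _ hpar _ Pa la Pb lb; case: (hpar P l) => l0 [_ u].
by rewrite -(u a) ?Pa ?la // (u b) ?Pb ?lb.
Qed.

Lemma par_refl l : par l l.
Proof. by rewrite /par eqxx. Qed.

Lemma par_sym a b : par a b = par b a.
Proof. by rewrite /par eq_sym; congr (_ || _); apply: eq_forallb => P; rewrite andbC. Qed.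

Lemma par_eq_meet P a b : par a b -> inc P a -> inc P b -> a = b.
Proof. by case/orP => [/eqP // | /forallP /(_ P)]; rewrite negb_and => /orP [] /negbTE ->. Qed.

Lemma par_trans a b c : par a b -> par b c -> par a c.
Proof.
move=> ab bc; have [-> | ne] := eqVneq a c; first exact: par_refl.
apply/orP; right; apply/forallP => P; apply/negP => /andP [Pa Pc].
by move/eqP: ne; apply; apply: (par_uniq Pa _ Pc bc); rewrite par_sym.
Qed.

Lemma npar_meet a b : ~~ par a b -> exists P, inc P a && inc P b.
Proof. by rewrite negb_or => /andP [_ /forallPn [P]]; rewrite negbK; exists P. Qed.

Lemma meet_npar P a b : inc P a -> inc P b -> a != b -> ~~ par a b.
Proof. by move=> Pa Pb; apply: contra => ab; rewrite (par_eq_meet ab Pa Pb). Qed.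

Lemma exists_point_off l : exists P, ~~ inc P l.
Proof.
case: hS => _ _ [P [Q [R [_ _ _ noncol]]]].
have [Pl|] := boolP (inc P l); last by exists P.
have [Ql|] := boolP (inc Q l); last by exists Q.
have [Rl|] := boolP (inc R l); last by exists R.
by case: noncol; exists l; rewrite Pl Ql Rl.
Qed.

Lemma exists_other_point P : exists Q, Q != P.
Proof.
case: hS => _ _ [P1 [Q1 [_ [P1Q1 _ _ _]]]].
by have [<- | ] := eqVneq P1 P; [exists Q1; rewrite eq_sym | exists P1].
Qed.

Lemma line_nonempty l : exists X, inc X l.
Proof.
have [/existsP // | /existsPn empty] := boolP [exists X, inc X l].
have l_par k : par l k.
  by apply/orP; right; apply/forallP => X; rewrite (negbTE (empty X)).
case: hS => _ _ [P [Q [R [PQ _ PR noncol]]]].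
case: (exists_join PQ) => a /andP [Pa Qa]; case: (exists_join PR) => b /andP [Pb Rb].
by case: noncol; exists a; rewrite Pa Qa (par_uniq Pa (l_par a) Pb (l_par b)) Rb.
Qed.

Lemma exists_npar l : exists k, ~~ par l k.
Proof.
case: (line_nonempty l) => X Xl; case: (exists_point_off l) => Y Yl.
have XY : X != Y by apply: contraNneq Yl => <-.
case: (exists_join XY) => k /andP [Xk Yk]; exists k.
by apply: (meet_npar Xl Xk); apply: contraNneq Yl => ->.
Qed.

(* Projection parallel to k maps the points of l bijectively onto the class of k. *)
Lemma card_class_npar l k : ~~ par l k -> #|class_of k| = #|points_of l|.
Proof.
move=> nlk; pose f P := xchoose (exists_par P k).
have fP P : inc P (f P) && par k (f P) := xchooseP (exists_par P k).
have f_inj : {in points_of l &, injective f}.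
  move=> P Q; rewrite !inE => Pl Ql eqf; apply/eqP; apply: contraNT nlk => PQ.
  case/andP: (fP P) => Pf kf; case/andP: (fP Q); rewrite -eqf => Qf _.
  by rewrite par_sym (join_uniq PQ Pl Ql Pf Qf).
rewrite -(card_in_imset f_inj); apply: eq_card => k'; rewrite inE.
apply/idP/imsetP => [kk' | [P _ ->]]; last by case/andP: (fP P).
have nlk' : ~~ par l k'.
  by apply: contra nlk => lk'; apply: par_trans lk' _; rewrite par_sym.
case: (npar_meet nlk') => P /andP [Pl Pk']; exists P; rewrite ?inE //.
by case/andP: (fP P) => Pf kf; apply: par_uniq Pk' kk' Pf kf.
Qed.

Lemma card_points_gt1 l : 1 < #|points_of l|.
Proof.
case: (exists_npar l) => k /card_class_npar <-; case: (exists_point_off k) => X Xk.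
case: (exists_par X k) => k' /andP [Xk' kk']; apply/card_gt1P; exists k, k'.
by rewrite !inE par_refl kk'; split=> //; apply: contraNneq Xk => ->.
Qed.

Lemma exists_other_on X l : inc X l -> exists2 Y, inc Y l & Y != X.
Proof.
move=> Xl; case/card_gt1P: (card_points_gt1 l) => Y [Z []]; rewrite !inE => Yl Zl YZ.
by have [eYX | ] := eqVneq Y X; [exists Z; rewrite // -eYX eq_sym | exists Y].
Qed.

Lemma exists_on_off l l' : l != l' -> exists2 X, inc X l & ~~ inc X l'.
Proof.
move=> ll'; case/card_gt1P: (card_points_gt1 l) => X [Y []]; rewrite !inE => Xl Yl XY.
have [Xl' | ] := boolP (inc X l'); last by exists X.
have [Yl' | ] := boolP (inc Y l'); last by exists Y.
by case/eqP: ll'; apply: join_uniq XY Xl Yl Xl' Yl'.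
Qed.

Lemma card_points_eq l l' : #|points_of l| = #|points_of l'|.
Proof.
have [-> // | ll'] := eqVneq l l'.
case: (exists_on_off ll') => X Xl Xl'; rewrite eq_sym in ll'.
case: (exists_on_off ll') => Y Yl' Yl.
have XY : X != Y by apply: contraNneq Yl => <-.
case: (exists_join XY) => k /andP [Xk Yk].
rewrite -(@card_class_npar l k) -?(@card_class_npar l' k) //.
  by apply: (meet_npar Yl' Yk); apply: contraNneq Xl' => ->.
by apply: (meet_npar Xl Xk); apply: contraNneq Yl => ->.
Qed.

Lemma eq_class_of a b : par a b -> class_of a = class_of b.
Proof.
move=> ab; apply/setP => c; rewrite !inE.
by apply/idP/idP => [ac | bc]; [apply: par_trans ac; rewrite par_sym | apply: par_trans bc].
Qed.

Lemma card_class k : #|class_of k| = #|points_of k|.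
Proof.
by case: (exists_npar k) => l; rewrite par_sym => /card_class_npar ->; apply: card_points_eq.
Qed.

Lemma exists_line_off P : exists l, ~~ inc P l.
Proof.
case: (exists_other_point P) => Q QP; case: (exists_join QP) => k /andP [_ Pk].
case: (exists_point_off k) => R Rk; case: (exists_par R k) => l /andP [Rl kl].
by exists l; apply: contraNN Rk => Pl; rewrite (par_eq_meet kl Pk Pl).
Qed.

(* Through P there is one parallel to a line k missing P,
   and one join with each point of k. *)
Lemma card_lines_through P l0 : #|[set l | inc P l]| = #|points_of l0|.+1.
Proof.
case: (exists_line_off P) => k Pk; rewrite (card_points_eq l0 k).
rewrite -(cardsID (class_of k)) -add1n; congr (_ + _).
  case: (exists_par P k) => kP /andP [PkP kkP]; apply/eqP/cards1P; exists kP.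
  apply/setP => l; rewrite !inE; apply/andP/eqP => [[Pl kl] | ->] //.
  exact: par_uniq Pl kl PkP kkP.
have PY Y : inc Y k -> P != Y by move=> Yk; apply: contraNneq Pk => ->.
pose j Y := odflt k [pick l | inc P l && inc Y l].
have jP Y : inc Y k -> inc P (j Y) && inc Y (j Y).
  move=> /PY /exists_join [l Pl]; rewrite /j; case: pickP => //= /(_ l).
  by rewrite Pl.
have j_inj : {in points_of k &, injective j}.
  move=> Y Y'; rewrite !inE => Yk Y'k eqj; apply/eqP; apply: contraNT Pk => YY'.
  case/andP: (jP Y Yk) => Pj Yj; case/andP: (jP Y' Y'k); rewrite -eqj => _ Y'j.
  by rewrite -(join_uniq YY' Yj Y'j Yk Y'k).
rewrite -(card_in_imset j_inj); apply: eq_card => l; rewrite !inE.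
apply/andP/imsetP => [[nkl Pl] | [Y]]; rewrite ?inE.
  case: (npar_meet nkl) => Y /andP [Yk Yl]; exists Y; rewrite ?inE //.
  by case/andP: (jP Y Yk) => Pj Yj; apply: join_uniq (PY Y Yk) Pl Yl Pj Yj.
move=> Yk ->; case/andP: (jP Y Yk) => Pj Yj; split=> //.
by rewrite par_sym (meet_npar Yj Yk) //; apply: contraNneq Pk => <-.
Qed.

Lemma exists_order : exists m, 2 <= m /\ affine_plane_order S m.
Proof.
case: (hS) => _ _ [P [Q [_ [PQ _ _ _]]]].
case: (exists_join PQ) => l0 _; exists #|points_of l0|.
by split; [exact: card_points_gt1 | split=> // l; apply: card_points_eq].
Qed.

End AffinePlane.

Section HjelmslevPlane.
Variables (H A : IS) (fp : ipt H -> ipt A) (fl : iln H -> iln A).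
Hypotheses (hA : affine_plane A) (fp_surj : surj fp)
  (join_H : forall X Y : ipt H, exists g, inc X g && inc Y g)
  (inc_f : forall X g, inc X g -> inc (fp X) (fl g))
  (fp_nbp : forall X Y, fp X = fp Y <-> nbp X Y)
  (fl_nbl : forall g h, fl g = fl h <-> nbl g h)
  (fl_par : forall g h, (forall X, ~~ (inc X g && inc X h)) -> par (fl g) (fl h))
  (restr_affine : forall X : ipt H, affine_plane (restr X)).
Implicit Types (X Y Z : ipt H) (g h : iln H) (P Q R : ipt A) (l : iln A).

Lemma nbpE X Y : nbp X Y = (fp X == fp Y).
Proof. by apply/idP/eqP => /fp_nbp. Qed.

Lemma line_uniq_far X Y g h :
  fp X != fp Y -> inc X g -> inc Y g -> inc X h -> inc Y h -> g = h.
Proof.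
rewrite -nbpE /nbp negb_or -leqNgt => /andP [_ /card_le1P le1] Xg Yg Xh Yh.
by have := le1 g; rewrite !inE Xg Yg => /(_ isT h); rewrite !inE Xh Yh => /esym/eqP.
Qed.

Lemma fl_eq_meet2 g h X Y :
  X != Y -> inc X g -> inc X h -> inc Y g -> inc Y h -> fl g = fl h.
Proof.
move=> XY Xg Xh Yg Yh; apply/fl_nbl/orP; right; apply/card_gt1P.
by exists X, Y; rewrite !inE Xg Xh Yg Yh.
Qed.

Lemma fp_eq_meet2 g h X Y :
  g != h -> inc X g -> inc X h -> inc Y g -> inc Y h -> fp X = fp Y.
Proof.
move=> gh Xg Xh Yg Yh; apply/fp_nbp/orP; right; apply/card_gt1P.
by exists g, h; rewrite !inE Xg Xh Yg Yh.
Qed.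

(* Otherwise a line of H joining the fibres over P and over a point off [fl g]
   would be disjoint from g, so its image would be parallel to [fl g] through P. *)
Lemma exists_on_fibre g P : inc P (fl g) -> exists2 X, fp X = P & inc X g.
Proof.
move=> Pg; have [/existsP [X /andP [/eqP fX Xg]] | /existsPn none] :=
  boolP [exists X, (fp X == P) && inc X g]; first by exists X.
case: (exists_point_off hA (fl g)) => R Rg.
have PR : P != R by apply: contraNneq Rg => <-.
case: (exists_join hA PR) => l /andP [Pl Rl].
case: (fp_surj P) => XP fXP; case: (fp_surj R) => XR fXR.
case: (join_H XP XR) => k /andP [XPk XRk].
have fk : fl k = l.
  by apply: (join_uniq hA PR) Pl Rl; rewrite -?fXP -?fXR inc_f.
have disj W : ~~ (inc W k && inc W g).
  apply/andP => -[Wk Wg]; have [fW | fWP] := eqVneq (fp W) P.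
    by move: (none W); rewrite fW eqxx Wg.
  have := inc_f Wk; rewrite fk => Wl.
  by move: Rg; rewrite (join_uniq hA fWP (inc_f Wg) Pg Wl Pl) Rl.
have := par_eq_meet (fl_par disj); rewrite fk => /(_ P Pl Pg) lg.
by rewrite -lg Rl in Rg.
Qed.

Lemma exists_restr_line Pt g Z :
  nbp Pt Z -> inc Z g -> exists S : nb_ln Pt, val S = restr_line Pt g.
Proof.
move=> PtZ Zg; have ne : restr_line Pt g != set0.
  by apply/set0Pn; exists (exist _ Z PtZ); rewrite inE.
have hS : (restr_line Pt g != set0) && [exists g', restr_line Pt g == restr_line Pt g'].
  by rewrite ne; apply/existsP; exists g.
by exists (Sub (restr_line Pt g) hS : nb_ln Pt).
Qed.

(* Distinct g and h with the same image share a second point W; it lies in the fibre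
   of Z, so both traces are the line of the fibre plane through Z and W. *)
Lemma restr_line_eq Pt g h Z : nbp Pt Z -> inc Z g -> inc Z h ->
  fl g = fl h -> restr_line Pt g = restr_line Pt h.
Proof.
move=> PtZ Zg Zh; have [-> // | gh] := eqVneq g h.
move/fl_nbl; rewrite /nbl (negbTE gh) => /card_gt1P [X [Y []]].
rewrite !inE => /andP [Xg Xh] /andP [Yg Yh] XY.
have [W [Wg Wh WZ]] : exists W, [/\ inc W g, inc W h & W != Z].
  by have [eXZ | ] := eqVneq X Z; [exists Y; rewrite -eXZ eq_sym | exists X].
have PtW : nbp Pt W by rewrite nbpE (fp_eq_meet2 gh Wg Wh Zg Zh) -nbpE.
case: (exists_restr_line PtZ Zg) => Sg eSg; case: (exists_restr_line PtZ Zh) => Sh eSh.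
have WZ' : exist _ W PtW != exist _ Z PtZ :> nb_pt Pt by [].
rewrite -eSg -eSh; congr val.
by apply: (join_uniq (restr_affine Pt) WZ'); rewrite /= ?eSg ?eSh inE.
Qed.

Lemma fl_eq_of_restr_line Pt g h Z : nbp Pt Z -> inc Z g -> inc Z h ->
  restr_line Pt g = restr_line Pt h -> fl g = fl h.
Proof.
move=> PtZ Zg Zh eq_gh; case: (exists_restr_line PtZ Zg) => S eS.
have ZS : @inc (restr Pt) (exist _ Z PtZ) S by rewrite /= eS inE.
case: (exists_other_on (restr_affine Pt) ZS) => W; rewrite /= eS => Wg WZ.
have Wh : W \in restr_line Pt h by rewrite -eq_gh.
rewrite !inE in Wg Wh; apply: fl_eq_meet2 Wg Wh Zg Zh.
by apply: contra WZ => /eqP eWZ; apply/eqP/val_inj.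
Qed.

Lemma exists_lift Pt (S : nb_ln Pt) : exists g, val S == restr_line Pt g.
Proof. by case/andP: (valP S) => _ /existsP. Qed.

Definition lift Pt (S : nb_ln Pt) := xchoose (exists_lift S).

Lemma liftE Pt (S : nb_ln Pt) : val S = restr_line Pt (lift S).
Proof. exact/eqP/(xchooseP (exists_lift S)). Qed.

Lemma mem_lift Pt (S : nb_ln Pt) (Z : nb_pt Pt) : (Z \in val S) = inc (val Z) (lift S).
Proof. by rewrite liftE inE. Qed.

Lemma fl_lift Pt (S : nb_ln Pt) g Z :
  nbp Pt Z -> inc Z g -> val S = restr_line Pt g -> fl (lift S) = fl g.
Proof.
move=> PtZ Zg eS; apply: (fl_eq_of_restr_line PtZ _ Zg); last by rewrite -liftE.
by rewrite -(mem_lift S (exist _ Z PtZ)) eS inE.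
Qed.

Lemma exists_rep P : exists X, fp X == P.
Proof. by case: (fp_surj P) => X <-; exists X. Qed.

Definition rep P := xchoose (exists_rep P).

Lemma fp_rep P : fp (rep P) = P.
Proof. exact/eqP/(xchooseP (exists_rep P)). Qed.

Lemma nbp_rep P Z : nbp (rep P) Z = (fp Z == P).
Proof. by rewrite nbpE fp_rep eq_sym. Qed.

Lemma nbp_refl X : nbp X X.
Proof. by rewrite /nbp eqxx. Qed.

Definition center P : nb_pt (rep P) := exist _ (rep P) (nbp_refl (rep P)).

Definition pi P l : {set nb_ln (rep P)} := [set S | fl (lift S) == l].

Lemma pi_same P l (S S' : nb_ln (rep P)) (Z : nb_pt (rep P)) :
  S \in pi P l -> S' \in pi P l -> Z \in val S -> Z \in val S' -> S = S'.
Proof.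
rewrite !inE !mem_lift => /eqP e /eqP e' ZS ZS'.
by apply: val_inj; rewrite !liftE; apply: (restr_line_eq (valP Z) ZS ZS'); rewrite e e'.
Qed.

Lemma pi_through P l (Z : nb_pt (rep P)) :
  inc P l -> exists2 S, S \in pi P l & Z \in val S.
Proof.
move=> Pl; have fZ : fp (val Z) = P by apply/eqP; rewrite -nbp_rep (valP Z).
case: (exists_other_on hA Pl) => Q Ql QP.
case: (join_H (val Z) (rep Q)) => g /andP [Zg Qg].
case: (exists_restr_line (valP Z) Zg) => S eS; exists S; last by rewrite eS inE.
have Qfg : inc Q (fl g) by rewrite -(fp_rep Q) inc_f.
have Pfg : inc P (fl g) by rewrite -fZ inc_f.
by rewrite inE (fl_lift (valP Z) Zg eS) (join_uniq hA QP Qfg Pfg Ql Pl).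
Qed.

Lemma pi_par P l (S S' : nb_ln (rep P)) :
  S \in pi P l -> S' \in pi P l -> @par (restr (rep P)) S S'.
Proof.
move=> hS hS'; have [-> | ne] := eqVneq S S'; first exact: par_refl.
apply/orP; right; apply/forallP => Z; apply/negP => /andP [ZS ZS'].
by case/eqP: ne; apply: pi_same hS hS' ZS ZS'.
Qed.

Lemma pi_class P l (S : nb_ln (rep P)) :
  inc P l -> S \in pi P l -> pi P l = @class_of (restr (rep P)) S.
Proof.
move=> Pl hS; apply/setP => S'; rewrite [in RHS]inE; apply/idP/idP; first exact: pi_par.
move=> SS'; case: (line_nonempty (restr_affine (rep P)) S') => Z ZS'.
case: (pi_through Z Pl) => S'' hS'' ZS''.
by rewrite (par_uniq (restr_affine _) ZS' SS' ZS'' (pi_par hS hS'')).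
Qed.

Variable n : nat.
Hypotheses (order_gt1 : 2 <= n.+1) (card_line_A : forall l : iln A, #|points_of l| = n.+1).

(* The lifts of the lines of the fibre through its centre are the lines of A through P. *)
Lemma card_points_fibre P (S : nb_ln (rep P)) : #|@points_of (restr (rep P)) S| = n.+1.
Proof.
pose G (S' : nb_ln (rep P)) := fl (lift S').
have G_inj : {in [set S' | @inc (restr (rep P)) (center P) S'] &, injective G}.
  move=> S1 S2; rewrite !inE /= !mem_lift => h1 h2 e.
  by apply: val_inj; rewrite !liftE; apply: (restr_line_eq (valP (center P)) h1 h2).
apply/succn_inj; rewrite -(card_lines_through (restr_affine (rep P)) (center P) S).
case: (exists_line_off hA P) => l0 _.
rewrite -(card_line_A l0) -(card_lines_through hA P l0) -(card_in_imset G_inj).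
apply: eq_card => l; rewrite inE; apply/imsetP/idP => [[S1] | Pl].
  by rewrite inE /= mem_lift => /inc_f; rewrite fp_rep => + ->.
case: (pi_through (center P) Pl) => S1; rewrite inE => /eqP <- h.
by exists S1; rewrite ?inE.
Qed.

Lemma card_pi P l : inc P l -> #|pi P l| = n.+1.
Proof.
move=> Pl; case: (pi_through (center P) Pl) => S hS _.
by rewrite (pi_class Pl hS) (card_class (restr_affine _)) card_points_fibre.
Qed.

Definition Sym (l : iln A) : finType := 'I_n.+1.
Definition Row l : finType := {g : iln H | fl g == l}.

Lemma exists_center_line P : exists S : nb_ln (rep P), center P \in val S.
Proof.
case: (join_H (rep P) (rep P)) => g /andP [Pg _].
by case: (exists_restr_line (nbp_refl (rep P)) Pg) => S eS; exists S; rewrite eS inE.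
Qed.

Definition default_line P := xchoose (exists_center_line P).

(* Junk value [default_line P] when g misses the fibre over P. *)
Definition trace P g : nb_ln (rep P) := insubd (default_line P) (restr_line (rep P) g).

Lemma traceE P g Z : nbp (rep P) Z -> inc Z g -> val (trace P g) = restr_line (rep P) g.
Proof. by move=> PZ Zg; case: (exists_restr_line PZ Zg) => S eS; rewrite /trace -eS valKd. Qed.

Lemma exists_on_row l (r : Row l) P : inc P l -> exists2 Z, nbp (rep P) Z & inc Z (val r).
Proof.
move=> Pl; have Pr : inc P (fl (val r)) by rewrite (eqP (valP r)).
by case: (exists_on_fibre Pr) => Z fZ Zr; exists Z; rewrite ?nbp_rep ?fZ.
Qed.

Lemma trace_in_pi l (r : Row l) P : inc P l -> trace P (val r) \in pi P l.
Proof.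
case/(exists_on_row r) => Z PZ Zr.
by rewrite inE (fl_lift PZ Zr (traceE PZ Zr)) (eqP (valP r)).
Qed.

Lemma mem_trace l (r : Row l) P (Z : nb_pt (rep P)) :
  inc P l -> (Z \in val (trace P (val r))) = inc (val Z) (val r).
Proof. by case/(exists_on_row r) => X PX Xr; rewrite (traceE PX Xr) inE. Qed.

Definition beta P l (s : Sym l) : nb_ln (rep P) := nth (default_line P) (enum (pi P l)) s.
Definition O l (r : Row l) P : Sym l := inord (index (trace P (val r)) (enum (pi P l))).
Arguments beta : clear implicits.
Arguments O : clear implicits.

Lemma size_enum_pi P l : inc P l -> size (enum (pi P l)) = n.+1.
Proof. by move=> Pl; rewrite -cardE card_pi. Qed.

Lemma beta_in_pi P l s : inc P l -> beta P l s \in pi P l.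
Proof. by move=> Pl; rewrite -mem_enum mem_nth // size_enum_pi. Qed.

Lemma beta_index P l S : inc P l -> S \in pi P l ->
  beta P l (inord (index S (enum (pi P l)))) = S.
Proof.
move=> Pl SP; rewrite /beta inordK ?nth_index ?mem_enum //.
by rewrite -(size_enum_pi Pl) index_mem mem_enum.
Qed.

Lemma beta_inj P l : inc P l -> injective (beta P l).
Proof.
move=> Pl; have index_beta s : index (beta P l s) (enum (pi P l)) = s.
  by rewrite index_uniq ?enum_uniq ?size_enum_pi.
by move=> s t eq_st; apply/ord_inj; rewrite -index_beta eq_st index_beta.
Qed.

Lemma beta_O l (r : Row l) P : inc P l -> beta P l (O l r P) = trace P (val r).
Proof. by move=> Pl; rewrite beta_index ?trace_in_pi. Qed.

Lemma O_eqE l (r : Row l) P s (Z : nb_pt (rep P)) : inc P l ->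
  Z \in val (beta P l s) -> (O l r P == s) = inc (val Z) (val r).
Proof.
move=> Pl Zs; rewrite -(mem_trace r Z Pl) -beta_O //.
apply/eqP/idP => [-> // | Zr]; apply: (beta_inj Pl).
exact: pi_same (beta_in_pi _ Pl) (beta_in_pi _ Pl) Zr Zs.
Qed.

(* Points in distinct fibres are joined by exactly one line of H. *)
Lemma O_orthogonal l P Q : P != Q -> inc P l -> inc Q l ->
  forall s t : Sym l, exists! r : Row l, O l r P = s /\ O l r Q = t.
Proof.
move=> PQ Pl Ql s t.
case: (line_nonempty (restr_affine (rep P)) (beta P l s)) => X Xs.
case: (line_nonempty (restr_affine (rep Q)) (beta Q l t)) => Y Yt.
have fX : fp (val X) = P by apply/eqP; rewrite -nbp_rep (valP X).
have fY : fp (val Y) = Q by apply/eqP; rewrite -nbp_rep (valP Y).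
case: (join_H (val X) (val Y)) => g /andP [Xg Yg].
have Pg : inc P (fl g) by rewrite -fX inc_f.
have Qg : inc Q (fl g) by rewrite -fY inc_f.
pose r : Row l := Sub g (introT eqP (join_uniq hA PQ Pg Qg Pl Ql)).
exists r; split.
  by split; apply/eqP; rewrite (O_eqE _ Pl Xs, O_eqE _ Ql Yt).
move=> r' [/eqP rP /eqP rQ]; apply: val_inj.
rewrite (O_eqE _ Pl Xs) in rP; rewrite (O_eqE _ Ql Yt) in rQ.
by apply: (line_uniq_far (X := val X) (Y := val Y)); rewrite ?fX ?fY.
Qed.

Lemma card_Row l : #|Row l| = n.+1 * n.+1.
Proof.
case: (line_nonempty hA l) => P Pl; case: (exists_other_on hA Pl) => Q Ql QP.
have PQ : P != Q by rewrite eq_sym.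
pose F (r : Row l) := (O l r P, O l r Q).
have F_inj : injective F.
  move=> r1 r2 eqF; have e1 := congr1 fst eqF; have e2 := congr1 snd eqF.
  case: (O_orthogonal PQ Pl Ql (O l r1 P) (O l r1 Q)) => r0 [_ u].
  by rewrite -(u r1 (conj erefl erefl)) (u r2 (conj (esym e1) (esym e2))).
rewrite -cardsT -(card_imset _ F_inj).
have -> : F @: [set: Row l] = [set: Sym l * Sym l].
  apply/setP => -[s t]; rewrite !inE; case: (O_orthogonal PQ Pl Ql s t) => r [[rP rQ] _].
  by apply/imsetP; exists r; rewrite ?inE // /F rP rQ.
by rewrite cardsT card_prod card_ord.
Qed.

Lemma pi_parallel_class P l : inc P l -> @parallel_class (restr (rep P)) (pi P l).
Proof.
by move=> Pl; case: (pi_through (center P) Pl) => S hS _; exists S; apply: pi_class.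
Qed.

Lemma pi_inj P l l' : inc P l -> pi P l = pi P l' -> l = l'.
Proof.
move=> Pl eq_pi; case: (pi_through (center P) Pl) => S hS _.
have hS' := hS; rewrite eq_pi in hS'.
by rewrite !inE in hS hS'; rewrite -(eqP hS) (eqP hS').
Qed.

Lemma pi_onto P (C : {set nb_ln (rep P)}) :
  @parallel_class (restr (rep P)) C -> exists l, inc P l /\ pi P l = C.
Proof.
case=> S0 ->; case: (exists_par (restr_affine (rep P)) (center P) S0) => S /andP [PS S0S].
have Pl : inc P (fl (lift S)) by move: PS; rewrite /= mem_lift => /inc_f; rewrite fp_rep.
have SP : S \in pi P (fl (lift S)) by rewrite inE.
exists (fl (lift S)); split=> //.
by rewrite (pi_class Pl SP) -(eq_class_of _ S0S).
Qed.

Lemma admissible_construction_data :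
  @admissible n.+1 A (fun P => restr (rep P)) Sym Row O pi beta.
Proof.
split; first by split=> // P; split; [exact: restr_affine | exact: card_points_fibre].
split.
- by move=> l; split; [exact: card_ord | exact: card_Row | exact: O_orthogonal].
- move=> P; split; [exact: pi_parallel_class | | exact: pi_onto].
  by move=> l l' Pl _; apply: pi_inj.
move=> P l Pl; split=> [|S]; first exact: beta_inj.
split=> [SP | [s <-]]; last exact: beta_in_pi.
by exists (inord (index S (enum (pi P l)))); apply: beta_index.
Qed.

Lemma isomorphic_construction :
  isomorphic H (@construction A (fun P => restr (rep P)) Sym Row O beta).
Proof.
have fibre X : nbp (rep (fp X)) X by rewrite nbp_rep.
exists (fun X => existT _ (fp X) (exist _ X (fibre X))),
  (fun g => existT _ (fl g) (exist _ g (eqxx (fl g)) : Row (fl g))); split.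
- exists (fun u : {P : ipt A & nb_pt (rep P)} => val (tagged u)) => [X // |].
  case=> P [X PX] /=.
  have fX : fp X = P by apply/eqP; rewrite -nbp_rep.
  by subst P; rewrite (bool_irrelevance (fibre X) PX).
- exists (fun L : {l : iln A & Row l} => val (tagged L)) => [g // | [l [g gl]] /=].
  have fg : fl g = l by apply/eqP.
  by subst l; rewrite (bool_irrelevance (eqxx (fl g)) gl).
move=> X g /=; have [Pg | nPg] := boolP (inc (fp X) (fl g)).
  by rewrite beta_O // mem_trace.
by apply/negbTE; apply: contra nPg; apply: inc_f.
Qed.

End HjelmslevPlane.

Theorem mainTheorem3 (H : IS) :
  two_uniform_AH H ->
  exists (m : nat) (A : IS) (AP : ipt A -> IS) (Sym Row : iln A -> finType)
    (O : forall l, Row l -> ipt A -> Sym l)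
    (pi : forall P : ipt A, iln A -> {set iln (AP P)})
    (beta : forall (P : ipt A) (l : iln A), Sym l -> iln (AP P)),
    @admissible m A AP Sym Row O pi beta /\ isomorphic H (@construction A AP Sym Row O beta).
Proof.
case=> [[join_H [A [fp [fl [[hA fp_surj _ inc_f] [fp_nbp fl_nbl fl_par]]]]]] uniform].
have restr_affine X : affine_plane (restr X) := (uniform X).1.
case: (exists_order hA) => -[|n] [order_gt1 [_ card_line_A]] //.
exists n.+1, A; do 6 eexists; split.
  exact: (admissible_construction_data hA fp_surj join_H inc_f fp_nbp fl_nbl fl_par
            restr_affine order_gt1 card_line_A).
exact: (isomorphic_construction hA fp_surj join_H inc_f fp_nbp fl_nbl fl_par
          restr_affine card_line_A).
Qed.
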